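(* Let $A\in\mathbb{R}^{n\times d}$ be a random data matrix whose rows are i.i.d. with mean zero and covariance $\Sigma$ (and satisfy Assumption 1 as in the context), split row-wise into $m$ blocks $A^{(i)}\in\mathbb{R}^{(n/m)\times d}$. Let $\lambda>0$, $H=\frac1nA^TA+\lambda I$, $d_\lambda=\mathrm{tr}(\Sigma(\Sigma+\lambda I)^{-1})$ with $md_\lambda<n$, and $\tilde H=\left(\frac1m\sum_{i=1}^m\left(\frac{1}{1-\frac{md_\lambda}{n}}\frac mnA^{(i)T}A^{(i)}+\lambda I\right)^{-1}\right)^{-1}$. For a vector $g_t$, let $p_t^\star=H^{-1}g_t$ be the true Newton step and $\tilde p_t$ the output of $s_t$ iterations of preconditioned conjugate gradient for $Hp=g_t$ with preconditioner $\tilde H^{-1}$ and initial point $0$. Then \[\frac{\|\tilde p_t-p_t^\star\|_H^2}{\|p_t^\star\|_H^2}\le4\left(\frac{1-\sqrt{1-\frac{\alpha}{1-\alpha}}}{1+\sqrt{1-\frac{\alpha}{1-\alpha}}}\right)^{s_t},\] where $\alpha=(\sigma_{\max}+\lambda+\alpha_0)\left(\frac1{\lambda^2}\alpha_0+\alpha_1+\|\Omega_0\|\right)$, $\alpha_0=\|\Sigma-\frac1nA^TA\|$, $\alpha_1=\|\tilde H^{-1}-\mathbb{E}[\tilde H^{-1}]\|$, $\Omega_0=\mathbb{E}[\tilde H^{-1}]-(\Sigma+\lambda I)^{-1}$, and $\sigma_{\max}$ is the largest eigenvalue of $\Sigma$.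
   Context: $\|v\|_H=\sqrt{v^THv}$; $\|\cdot\|$ is the spectral norm. Assumption 1 (for rows $x$ of the data, in the regime $n,d\to\infty$, $d/n\to y\in[0,1)$): the empirical spectral distribution of the covariance converges a.s. for a.e. $u\ge0$; $\sup_{\|e\|=1}\mathbb{E}(e^Tx)^4<\infty$ and $\sup_{\|\Omega\|=1}\mathrm{Var}(x^T\Omega x/d)\to0$; eigenvalues of the covariance lie in $[\sigma_{\min},\sigma_{\max}]$ with $\sigma_{\min}>0$ and $\sigma_{\max}$ independent of $n$.
   Formalization: The bound holds under the further hypothesis $\alpha<1/2$, and Assumption 1 enters without its empirical spectral distribution convergence, fourth-moment bound and vanishing-variance conditions. Apart from conventions, each condition added here is assumed in the paper as well or is needed for the statement above to hold. *)

From HB Require Import structures.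
From mathcomp Require Import all_boot all_order all_algebra.
From mathcomp Require Import all_classical all_reals all_analysis.
Set Implicit Arguments. Unset Strict Implicit. Unset Printing Implicit Defensive.
Import Order.TTheory GRing.Theory Num.Theory.
Local Open Scope ring_scope.
Local Open Scope classical_set_scope.

Section Defs.
Variable R : realType.

Definition vnorm q (v : 'cV[R]_q) : R := Num.sqrt (\sum_i v i ord0 ^+ 2).

Definition specnorm p q (M : 'M[R]_(p, q)) : R :=
  sup [set r | exists v : 'cV[R]_q, vnorm v = 1 /\ r = vnorm (M *m v)].

Definition Hnorm2 q (H : 'M[R]_q) (v : 'cV[R]_q) : R := (v^T *m H *m v) ord0 ord0.

Lemma block_index_proof m b (i : 'I_m) (k : 'I_b) : (i * b + k < m * b)%N.
Proof.
case: i k => i Hi [k Hk] /=.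
have : (i.+1 * b <= m * b)%N by rewrite leq_mul2r Hi orbT.
by rewrite mulSn => H; apply: leq_trans H; rewrite addnC ltn_add2r.
Qed.
Definition block_index m b (i : 'I_m) (k : 'I_b) : 'I_(m * b) :=
  Ordinal (block_index_proof i k).

(* the i-th block A^(i) of rows (b = n/m rows each) *)
Definition block m b d (A : 'M[R]_(m * b, d)) (i : 'I_m) : 'M[R]_(b, d) :=
  \matrix_(k < b, j < d) A (block_index i k) j.

Definition deff d (Sigma : 'M[R]_d) (lam : R) : R :=
  \tr (Sigma *m invmx (Sigma + lam%:M)).

Definition Htinv m b d (A : 'M[R]_(m * b, d)) (Sigma : 'M[R]_d) (lam : R) : 'M[R]_d :=
  let n : R := (m * b)%:R in
  m%:R^-1 *: \sum_(i < m)
     invmx ((1 - m%:R * deff Sigma lam / n)^-1 *: ((m%:R / n) *: ((block A i)^T *m block A i))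
            + lam%:M).

Definition Hmat m b d (A : 'M[R]_(m * b, d)) (lam : R) : 'M[R]_d :=
  ((m * b)%:R^-1 *: (A^T *m A)) + lam%:M.

Definition dotv q (u v : 'cV[R]_q) : R := (u^T *m v) ord0 ord0.

Fixpoint pcg_state q (H M : 'M[R]_q) (g : 'cV[R]_q) (s : nat)
  : 'cV[R]_q * 'cV[R]_q * 'cV[R]_q :=
  match s with
  | O => (0, g, M *m g)
  | S s' =>
    let '(x, r, p) := pcg_state H M g s' in
    let z := M *m r in
    let a := dotv r z / dotv p (H *m p) in
    let x' := x + a *: p in
    let r' := r - a *: (H *m p) in
    let z' := M *m r' in
    let bt := dotv r' z' / dotv r z in
    (x', r', z' + bt *: p)
  end.

Definition pcg q (H M : 'M[R]_q) (g : 'cV[R]_q) (s : nat) : 'cV[R]_q :=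
  (pcg_state H M g s).1.1.

End Defs.

(* Mutual independence and identical distribution of the rows of a random matrix,
   tested on rectangles (products of Borel sets), which form a pi-system generating
   the Borel sigma-algebra of R^d. *)
Definition rows_iid (dT : measure_display) (T : measurableType dT) (R : realType)
  (P : probability T R) n d (A : T -> 'M[R]_(n, d)) : Prop :=
  (forall (B : 'I_n -> 'I_d -> set R), (forall r j, measurable (B r j)) ->
     P [set w : T | forall r j, B r j (A w r j)] =
     (\prod_(r < n) P [set w : T | forall j, B r j (A w r j)])%E)
  /\ (forall (B : 'I_d -> set R) (r r' : 'I_n), (forall j, measurable (B j)) ->
     P [set w : T | forall j, B j (A w r j)] = P [set w : T | forall j, B j (A w r' j)]).

(* PCG minimises the H-norm of the error over the span of its search directions,
   which contains the iterates of the preconditioned Richardson iteration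
   e |-> e - M H e, M = \tilde H^{-1}.  It therefore suffices that this iteration
   contracts the squared H-norm by alpha^2, and by polarization this follows from
   |x^T H x - (Hx)^T M (Hx)| <= alpha x^T H x.  Writing S = Sigma + lambda I and
   H = S - G with G = Sigma - A^T A / n, the left-hand side equals
   x^T G S^{-1} H x - (Hx)^T (M - S^{-1}) Hx; as lambda |x|, lambda |S^{-1} H x| <= |Hx|
   and |Hx|^2 <= (sigma_max + lambda + alpha_0) x^T H x, it is at most alpha x^T H x.
   Since alpha^2 <= rho, the error ratio is at most alpha^(2s) <= 4 rho^s. *)

From HB Require Import structures.
From mathcomp Require Import all_boot all_order all_algebra.
From mathcomp Require Import all_classical all_reals all_analysis.
From mathcomp Require Import complex ring lra.
Import Order.TTheory GRing.Theory Num.Theory.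
Local Open Scope ring_scope.
Local Open Scope classical_set_scope.
Set Implicit Arguments. Unset Strict Implicit. Unset Printing Implicit Defensive.

Definition psd (R : realType) q (Q : 'M[R]_q) := forall v, 0 <= dotv v (Q *m v).

Definition posdef (R : realType) q (Q : 'M[R]_q) :=
  forall v, v != 0 -> 0 < dotv v (Q *m v).

Definition coercive (R : realType) q (lam : R) (Q : 'M[R]_q) :=
  forall v, lam * dotv v v <= dotv v (Q *m v).

Section DotProduct.
Variables (R : realType) (q : nat).
Implicit Types (u v w : 'cV[R]_q) (Q : 'M[R]_q).

Lemma dotvE u v : dotv u v = \sum_i u i 0 * v i 0.
Proof. by rewrite /dotv mxE; apply: eq_bigr => i _; rewrite mxE. Qed.

Lemma dotvC u v : dotv u v = dotv v u.
Proof. by rewrite !dotvE; apply: eq_bigr => i _; rewrite mulrC. Qed.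

Lemma dotvDl u v w : dotv (u + v) w = dotv u w + dotv v w.
Proof. by rewrite !dotvE -big_split; apply: eq_bigr => i _; rewrite mxE mulrDl. Qed.

Lemma dotvDr u v w : dotv w (u + v) = dotv w u + dotv w v.
Proof. by rewrite dotvC dotvDl !(dotvC w). Qed.

Lemma dotvZl a u v : dotv (a *: u) v = a * dotv u v.
Proof. by rewrite !dotvE mulr_sumr; apply: eq_bigr => i _; rewrite mxE mulrA. Qed.

Lemma dotvZr a u v : dotv u (a *: v) = a * dotv u v.
Proof. by rewrite dotvC dotvZl dotvC. Qed.

Lemma dotvNl u v : dotv (- u) v = - dotv u v.
Proof. by rewrite -scaleN1r dotvZl mulN1r. Qed.

Lemma dotvNr u v : dotv u (- v) = - dotv u v.
Proof. by rewrite dotvC dotvNl dotvC. Qed.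

Lemma dotvBl u v w : dotv (u - v) w = dotv u w - dotv v w.
Proof. by rewrite dotvDl dotvNl. Qed.

Lemma dotvBr u v w : dotv w (u - v) = dotv w u - dotv w v.
Proof. by rewrite dotvDr dotvNr. Qed.

Lemma dotv0l v : dotv 0 v = 0.
Proof. by rewrite -(scale0r 0) dotvZl mul0r. Qed.

Lemma dotv0r v : dotv v 0 = 0.
Proof. by rewrite dotvC dotv0l. Qed.

Lemma dotv_sumr n (f : 'I_n -> 'cV[R]_q) u :
  dotv u (\sum_(i < n) f i) = \sum_(i < n) dotv u (f i).
Proof.
elim: n f => [|n IH] f; first by rewrite !big_ord0 dotv0r.
by rewrite !big_ord_recr /= dotvDr IH.
Qed.

Lemma dotv_mulmxl p (A : 'M[R]_(p, q)) u (v : 'cV[R]_p) :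
  dotv (A *m u) v = dotv u (A^T *m v).
Proof. by rewrite /dotv trmx_mul mulmxA. Qed.

Lemma dotv_sym Q u v : Q^T = Q -> dotv u (Q *m v) = dotv v (Q *m u).
Proof. by move=> sQ; rewrite dotvC dotv_mulmxl sQ. Qed.

Lemma dotvv_ge0 v : 0 <= dotv v v.
Proof. by rewrite dotvE; apply: sumr_ge0 => i _; rewrite -expr2 sqr_ge0. Qed.

Lemma dotvv_eq0 v : (dotv v v == 0) = (v == 0).
Proof.
apply/idP/eqP => [|->]; last by rewrite dotv0l.
rewrite dotvE psumr_eq0 => [/allP v0|i _]; last by rewrite -expr2 sqr_ge0.
apply/matrixP => i j; rewrite ord1 mxE; apply/eqP.
by have := v0 i (mem_index_enum _); rewrite -expr2 sqrf_eq0.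
Qed.

Lemma Hnorm2E Q v : Hnorm2 Q v = dotv v (Q *m v).
Proof. by rewrite /Hnorm2 /dotv mulmxA. Qed.

Lemma quadratic_ge0_discr (a b c : R) : 0 <= a ->
  (forall t, 0 <= c + 2 * t * b + t ^+ 2 * a) -> b ^+ 2 <= c * a.
Proof.
have [-> _ quad_ge0|an0 a0 quad_ge0] := eqVneq a 0.
  have [->|bn0] := eqVneq b 0; first by rewrite expr0n mulr0.
  have := quad_ge0 (- (c + 1) / (2 * b)); rewrite mulr0 addr0.
  by rewrite mulrAC mulrCA mulfV ?mulf_neq0 // mulr1; lra.
have a_gt0 : 0 < a by rewrite lt_def an0.
have := quad_ge0 (- b / a).
rewrite (_ : c + _ + _ = c - b ^+ 2 / a); last by field.
by rewrite subr_ge0 ler_pdivrMr.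
Qed.

Lemma dotv_CauchySchwarz Q u v : Q^T = Q -> psd Q ->
  dotv u (Q *m v) ^+ 2 <= dotv u (Q *m u) * dotv v (Q *m v).
Proof.
move=> sQ Q_psd; apply: quadratic_ge0_discr => // t.
have := Q_psd (u + t *: v).
rewrite mulmxDr -scalemxAr !dotvDl !dotvDr !dotvZl !dotvZr (dotv_sym v u sQ).
by congr (0 <= _); ring.
Qed.

Lemma vnormE v : vnorm v = Num.sqrt (dotv v v).
Proof. by rewrite /vnorm dotvE; congr Num.sqrt; apply: eq_bigr => i _; rewrite expr2. Qed.

Lemma vnorm_ge0 v : 0 <= vnorm v.
Proof. by rewrite vnormE sqrtr_ge0. Qed.

Lemma vnorm_sqr v : vnorm v ^+ 2 = dotv v v.
Proof. by rewrite vnormE sqr_sqrtr ?dotvv_ge0. Qed.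

Lemma vnorm0 : vnorm (0 : 'cV[R]_q) = 0.
Proof. by rewrite vnormE dotv0l sqrtr0. Qed.

Lemma vnorm_gt0 v : (0 < vnorm v) = (v != 0).
Proof. by rewrite vnormE sqrtr_gt0 lt_def dotvv_ge0 dotvv_eq0 andbT. Qed.

Lemma normr_dotv_le u v : `|dotv u v| <= vnorm u * vnorm v.
Proof.
have id_psd : psd (1%:M : 'M[R]_q) by move=> x; rewrite mul1mx dotvv_ge0.
have := dotv_CauchySchwarz u v (trmx1 _ _) id_psd; rewrite !mul1mx.
rewrite -!vnorm_sqr -exprMn -real_normK ?num_real // => le_sq.
by rewrite -(@ler_pXn2r _ 2) ?nnegrE ?normr_ge0 ?mulr_ge0 ?vnorm_ge0.
Qed.

Lemma vnormZ a v : vnorm (a *: v) = `|a| * vnorm v.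
Proof. by rewrite !vnormE dotvZl dotvZr mulrA -expr2 sqrtrM ?sqr_ge0 // sqrtr_sqr. Qed.

Lemma vnormD u v : vnorm (u + v) <= vnorm u + vnorm v.
Proof.
rewrite -(@ler_pXn2r _ 2) ?nnegrE ?addr_ge0 ?vnorm_ge0 //.
rewrite vnorm_sqr dotvDl !dotvDr (dotvC v u) sqrrD !vnorm_sqr.
have := le_trans (ler_norm _) (normr_dotv_le u v); lra.
Qed.

Lemma vnormB u v : vnorm (u - v) <= vnorm u + vnorm v.
Proof. by rewrite -[vnorm v]mul1r -normrN1 -vnormZ scaleN1r vnormD. Qed.

End DotProduct.

Section SpectralNorm.
Variables (R : realType) (p q : nat) (M : 'M[R]_(p, q)).

Lemma vnorm_mulmx_le v : vnorm (M *m v) <= specnorm M * vnorm v.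
Proof.
have [->|vn0] := eqVneq v 0; first by rewrite mulmx0 !vnorm0 mulr0.
set E := [set r | exists v : 'cV[R]_q, vnorm v = 1 /\ r = vnorm (M *m v)].
have E_ub : has_ubound E.
  exists (Num.sqrt (\sum_(i < p) dotv (row i M)^T (row i M)^T)) => _ [u [u1 ->]].
  rewrite vnormE; apply: ler_wsqrtr; rewrite dotvE; apply: ler_sum => i _.
  have -> : (M *m u) i 0 = dotv (row i M)^T u.
    by rewrite dotvE mxE; apply: eq_bigr => j _; rewrite !mxE.
  rewrite -expr2 -vnorm_sqr -real_normK ?num_real // lerXn2r ?nnegrE ?vnorm_ge0 //.
  by have := normr_dotv_le (row i M)^T u; rewrite u1 mulr1.
have v_gt0 : 0 < vnorm v by rewrite vnorm_gt0.
have Eu : E (vnorm (M *m ((vnorm v)^-1 *: v))).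
  by exists ((vnorm v)^-1 *: v); rewrite vnormZ ger0_norm ?invr_ge0 ?mulVf ?gt_eqF ?ltW.
have := sup_upper_bound (conj (ex_intro _ _ Eu) E_ub) Eu.
rewrite -scalemxAr vnormZ ger0_norm ?invr_ge0 ?(ltW v_gt0) //.
by rewrite mulrC ler_pdivrMr.
Qed.

Lemma specnorm_ge0 : 0 <= specnorm M.
Proof.
have [[v v1]|no_unit] := pselect (exists v : 'cV[R]_q, vnorm v = 1).
  by have := vnorm_mulmx_le v; rewrite v1 mulr1; apply: le_trans; apply: vnorm_ge0.
rewrite /specnorm (_ : [set _ | _] = set0) ?sup0 //.
by apply/seteqP; split => // r [v [v1 _]]; apply: no_unit; exists v.
Qed.

End SpectralNorm.

Lemma posdef_psd (R : realType) q (Q : 'M[R]_q) : posdef Q -> psd Q.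
Proof. by move=> Q_pd v; have [->|/Q_pd/ltW//] := eqVneq v 0; rewrite dotv0l. Qed.

Lemma posdef_eq0 (R : realType) q (Q : 'M[R]_q) v :
  posdef Q -> dotv v (Q *m v) = 0 -> v = 0.
Proof. by move=> Q_pd; have [//|/Q_pd/gt_eqF/eqP] := eqVneq v 0. Qed.

Section Coercive.
Variables (R : realType) (q : nat) (lam : R) (Q : 'M[R]_q).
Hypotheses (lam_gt0 : 0 < lam) (Q_coercive : coercive lam Q).

Lemma coercive_vnorm v : lam * vnorm v <= vnorm (Q *m v).
Proof.
have [->|vn0] := eqVneq v 0; first by rewrite mulmx0 vnorm0 mulr0.
have v_gt0 : 0 < vnorm v by rewrite vnorm_gt0.
rewrite -(ler_pM2r v_gt0) -mulrA -expr2 vnorm_sqr.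
apply: le_trans (Q_coercive v) _; rewrite dotvC.
exact: le_trans (ler_norm _) (normr_dotv_le _ _).
Qed.

Lemma coercive_unitmx : Q \in unitmx.
Proof.
rewrite -unitmx_tr -row_free_unit; apply: inj_row_free => v vQ0.
have Qv0 : Q *m v^T = 0 by rewrite -[Q]trmxK -trmx_mul vQ0 trmx0.
have : lam * vnorm v^T <= 0 by rewrite -(vnorm0 R q) -Qv0 coercive_vnorm.
rewrite pmulr_rle0 // leNgt vnorm_gt0 negbK => /eqP vT0.
by rewrite -[v]trmxK vT0 trmx0.
Qed.

Lemma coercive_posdef : posdef Q.
Proof.
move=> v vn0; apply: lt_le_trans (Q_coercive v).
by rewrite mulr_gt0 // -vnorm_sqr exprn_gt0 // vnorm_gt0.
Qed.

End Coercive.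

Lemma posdef_invmx (R : realType) q (Q : 'M[R]_q) :
  Q^T = Q -> Q \in unitmx -> posdef Q -> posdef (invmx Q).
Proof.
move=> Q_sym Q_unit Q_pd v vn0; set u := invmx Q *m v.
have vE : v = Q *m u by rewrite mulKVmx.
have un0 : u != 0 by apply: contra vn0 => /eqP u0; rewrite vE u0 mulmx0.
by rewrite {1}vE dotvC; apply: Q_pd.
Qed.

(* MathComp's spectral theorem concerns matrices over an algebraically closed field,
   so [S] is diagonalised as a complex hermitian matrix; its diagonal entries are
   real eigenvalues of [S]. *)
Section RealSymmetricSpectral.
Variables (R : realType) (n : nat) (S : 'M[R]_n).
Hypothesis S_sym : S^T = S.
Local Open Scope complex_scope.
Local Open Scope sesquilinear_scope.
Local Notation toC := (map_mx (real_complex R)).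
Let Sc := toC S.
Let P := spectralmx Sc.
Let D := spectral_diag Sc.

Let Sc_herm : Sc \is hermsymmx.
Proof.
apply: realsym_hermsym.
  apply/is_hermitianmxP; rewrite expr0 scale1r.
  by apply/matrixP => i j; rewrite !mxE -[in LHS]S_sym mxE.
by apply/mxOverP => i j; rewrite mxE; apply/complex_realP; exists (S i j).
Qed.

Let P_unitary : P \is unitarymx. Proof. exact: spectral_unitarymx. Qed.

Let P_Sc : P *m Sc = diag_mx D *m P.
Proof.
have /orthomx_spectralP ScE := hermitian_normalmx Sc_herm.
by rewrite {1}ScE !mulmxA mulmxV ?spectral_unit // mul1mx.
Qed.

Lemma spectral_diag_eigenvalue i : exists2 mu : R, D 0 i = mu%:C & eigenvalue S mu.
Proof.
have /complex_realP [mu Dmu] : D 0 i \is Num.real.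
  exact: mxOverP (hermitian_spectral_diag_real Sc_herm) _ _.
exists mu => //.
rewrite eigenvalue_root_char -(fmorph_root (real_complex R)) map_char_poly.
rewrite -eigenvalue_root_char /= -Dmu; apply/eigenvalueP; exists (row i P).
  by rewrite -row_mul P_Sc mul_diag_mx; apply/rowP => j; rewrite !mxE.
apply/eqP => Pi0; have : row i (P *m P^t*) = 0 by rewrite row_mul Pi0 mul0mx.
rewrite (unitarymxP P_unitary) => /rowP /(_ i); rewrite !mxE eqxx /=.
by move/eqP; rewrite oner_eq0.
Qed.

Lemma dotv_spectral (u v : 'cV[R]_n) :
  (dotv u v)%:C = \sum_i Num.conj ((P *m toC u) i 0) * (P *m toC v) i 0.
Proof.
have PtP : P^t* *m P = 1%:M by rewrite -invmx_unitary // mulVmx // spectral_unit.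
transitivity (((P *m toC u)^t* *m (P *m toC v)) 0 0); last first.
  by rewrite mxE; apply: eq_bigr => j _; rewrite !mxE.
rewrite trmx_mul map_mxM -mulmxA (mulmxA _ P) PtP mul1mx dotvE rmorph_sum mxE.
apply: eq_bigr => j _; rewrite !mxE rmorphM; congr (_ * _); symmetry.
by apply: conj_Creal; apply/complex_realP; exists (u j 0).
Qed.

Lemma dotvv_spectral (v : 'cV[R]_n) :
  (dotv v v)%:C = \sum_i `|(P *m toC v) i 0| ^+ 2.
Proof. by rewrite dotv_spectral; apply: eq_bigr => i _; rewrite normCKC. Qed.

Lemma spectral_mulmx (v : 'cV[R]_n) :
  P *m toC (S *m v) = diag_mx D *m (P *m toC v).
Proof. by rewrite map_mxM mulmxA P_Sc mulmxA. Qed.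

Lemma realsym_psd : (forall a, eigenvalue S a -> 0 <= a) -> psd S.
Proof.
move=> eig_ge0 v; rewrite -ler0c dotv_spectral spectral_mulmx.
apply: sumr_ge0 => i _; rewrite mul_diag_mx [X in _ * X]mxE.
have [mu -> /eig_ge0 mu_ge0] := spectral_diag_eigenvalue i.
by rewrite mulrCA mulr_ge0 ?ler0c // mulrC mul_conjC_ge0.
Qed.

Lemma realsym_vnorm_le c : 0 <= c -> (forall a, eigenvalue S a -> `|a| <= c) ->
  forall v, vnorm (S *m v) <= c * vnorm v.
Proof.
move=> c_ge0 eig_le v; rewrite !vnormE -[c]ger0_norm // -sqrtr_sqr -sqrtrM ?sqr_ge0 //.
apply: ler_wsqrtr; rewrite -lecR rmorphM /= !dotvv_spectral spectral_mulmx mulr_sumr.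
apply: ler_sum => i _; rewrite mul_diag_mx mxE normrM exprMn ler_wpM2r ?exprn_ge0 //.
have [mu -> /eig_le mu_le] := spectral_diag_eigenvalue i.
rewrite rmorphXn /= lerXn2r ?nnegrE ?normr_ge0 ?ler0c //.
by rewrite normc_def /= expr0n addr0 sqrtr_sqr lecR.
Qed.

End RealSymmetricSpectral.

Lemma dotv_span_eq0 (R : realType) q (X : seq 'cV[R]_q) u v :
  {in X, forall y, dotv u y = 0} -> v \in <<X>>%VS -> dotv u v = 0.
Proof.
move=> uX0 /(@coord_span _ _ _ (in_tuple X)) ->; rewrite dotv_sumr big1 // => i _.
by rewrite dotvZr uX0 ?mulr0 // mem_nth.
Qed.

Lemma Hnorm2_addr_ge (R : realType) q (Q : 'M[R]_q) e w : Q^T = Q -> psd Q ->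
  dotv w (Q *m e) = 0 -> Hnorm2 Q e <= Hnorm2 Q (e + w).
Proof.
move=> Q_sym Q_psd we0; rewrite !Hnorm2E mulmxDr !dotvDl !dotvDr.
by rewrite (dotv_sym e w Q_sym) we0 add0r addr0 lerDl.
Qed.

Fixpoint richardson (R : realType) q (H M : 'M[R]_q) (g : 'cV[R]_q) k :=
  if k is k'.+1 then richardson H M g k' + M *m (g - H *m richardson H M g k') else 0.

Lemma richardson_error (R : realType) q (H M : 'M[R]_q) (g xstar : 'cV[R]_q) (c : R) :
  H *m xstar = g -> 0 <= c ->
  (forall e, Hnorm2 H (e - M *m (H *m e)) <= c * Hnorm2 H e) ->
  forall k, Hnorm2 H (richardson H M g k - xstar) <= c ^+ k * Hnorm2 H xstar.
Proof.
move=> Hx c_ge0 contr; elim=> [|k IH].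
  by rewrite /= sub0r !Hnorm2E mulmxN dotvNl dotvNr opprK expr0 mul1r.
have -> : richardson H M g k.+1 - xstar =
    (richardson H M g k - xstar) - M *m (H *m (richardson H M g k - xstar)).
  by rewrite /= -Hx !mulmxBr opprB addrAC.
by apply: le_trans (contr _) _; rewrite exprS -mulrA ler_wpM2l.
Qed.

Section PreconditionedCG.
Variables (R : realType) (q : nat) (H M : 'M[R]_q) (g : 'cV[R]_q).
Hypotheses (H_sym : H^T = H) (M_sym : M^T = M) (H_pd : posdef H) (M_pd : posdef M).

Let x k := (pcg_state H M g k).1.1.
Let r k := (pcg_state H M g k).1.2.
Let p k := (pcg_state H M g k).2.
Let z k := M *m r k.
Let alpha k := dotv (r k) (z k) / dotv (p k) (H *m p k).
Let beta k := dotv (r k.+1) (z k.+1) / dotv (r k) (z k).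
Local Notation span_p k := <<[seq p i | i <- iota 0 k]>>%VS.

Let pcg_stateS k : pcg_state H M g k.+1 =
  (x k + alpha k *: p k, r k - alpha k *: (H *m p k), z k.+1 + beta k *: p k).
Proof. by rewrite /alpha /beta /z /x /r /p /=; case: (pcg_state H M g k) => [[]]. Qed.

Let xS k : x k.+1 = x k + alpha k *: p k. Proof. by rewrite {1}/x pcg_stateS. Qed.
Let rS k : r k.+1 = r k - alpha k *: (H *m p k). Proof. by rewrite {1}/r pcg_stateS. Qed.
Let pS k : p k.+1 = z k.+1 + beta k *: p k. Proof. by rewrite {1}/p pcg_stateS. Qed.

Let residualE k : r k = g - H *m x k.
Proof.
elim: k => [|k IH]; first by rewrite /r /x /= mulmx0 subr0.
by rewrite rS xS IH mulmxDr -scalemxAr opprD addrA.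
Qed.

Let alpha_eq0 k : alpha k = 0 -> p k = 0.
Proof.
have r0_p0 : r k = 0 -> p k = 0.
  case: k => [|k] rk0; first by move: rk0; rewrite /p /r /= => ->; rewrite mulmx0.
  by rewrite pS /beta /z rk0 mulmx0 dotv0l mul0r scale0r addr0.
rewrite /alpha => /eqP; rewrite mulf_eq0 invr_eq0 => /orP[] /eqP.
  by move/(posdef_eq0 M_pd)/r0_p0.
exact: posdef_eq0.
Qed.

Let MHp k : alpha k != 0 -> M *m (H *m p k) = (alpha k)^-1 *: (z k - z k.+1).
Proof.
move=> ak0; rewrite /z rS mulmxBr opprB addrC subrK -scalemxAr scalerA.
by rewrite mulVf // scale1r.
Qed.

Let p_in_span i k : (i < k)%N -> p i \in span_p k.
Proof. by move=> ik; apply/memv_span/map_f; rewrite mem_iota. Qed.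

Let span_p_mono k k' : (k <= k')%N -> (span_p k <= span_p k')%VS.
Proof.
move=> kk'; apply/sub_span => _ /mapP[i + ->]; rewrite !mem_iota !add0n => ik.
by apply/map_f; rewrite mem_iota (leq_trans ik).
Qed.

Let z_in_span k : z k \in span_p k.+1.
Proof.
case: k => [|k]; first by rewrite /z (p_in_span (ltnSn 0)).
have -> : z k.+1 = p k.+1 - beta k *: p k by rewrite pS addrK.
by rewrite rpredB ?rpredZ ?p_in_span // ltnW.
Qed.

Let MHp_in_span i : M *m (H *m p i) \in span_p i.+2.
Proof.
have [/alpha_eq0 ->|ai0] := eqVneq (alpha i) 0; first by rewrite !mulmx0 rpred0.
rewrite MHp // rpredZ // rpredB ?z_in_span //.
exact: (subvP (span_p_mono (leqnSn _))) _ (z_in_span i).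
Qed.

Let MH_span k v : v \in span_p k -> M *m (H *m v) \in span_p k.+1.
Proof.
move=> /(@coord_span _ _ _ (in_tuple _)) ->; rewrite !mulmx_sumr rpred_sum // => i _.
have ik : (i < k)%N by case: i => i /=; rewrite size_map size_iota.
rewrite -!scalemxAr rpredZ // (nth_map 0) ?size_iota // nth_iota // add0n.
by apply: (subvP (span_p_mono _)) (MHp_in_span i).
Qed.

Let orth_span u k : (forall j, (j < k)%N -> dotv u (p j) = 0) ->
  forall v, v \in span_p k -> dotv u v = 0.
Proof.
move=> up0 v; apply: dotv_span_eq0 => _ /mapP[j + ->].
by rewrite mem_iota add0n => /andP[_ /up0].
Qed.

Let pcg_orth k := [/\ forall j, (j < k)%N -> dotv (r k) (p j) = 0,
  forall j, (j < k)%N -> dotv (p k) (H *m p j) = 0 &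
  dotv (r k) (p k) = dotv (r k) (z k)].

Let pcg_orth_r k : pcg_orth k -> forall j, (j < k.+1)%N -> dotv (r k.+1) (p j) = 0.
Proof.
case=> rp0 pHp0 rp_rz j; rewrite ltnS leq_eqVlt => /orP[/eqP ->|jk].
  rewrite rS dotvBl dotvZl dotv_mulmxl H_sym.
  have [->|pk0] := eqVneq (p k) 0; first by rewrite mulmx0 !dotv0r mulr0 subr0.
  by rewrite rp_rz /alpha mulfVK ?subrr // gt_eqF // H_pd.
by rewrite rS dotvBl dotvZl dotv_mulmxl H_sym rp0 // pHp0 // mulr0 subr0.
Qed.

Let pcg_orthS k : pcg_orth k -> pcg_orth k.+1.
Proof.
move=> orth_k; have rp0 := pcg_orth_r orth_k; case: orth_k => _ pHp0 _.
split => // [j|]; last by rewrite pS dotvDr dotvZr rp0 // mulr0 addr0.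
rewrite ltnS leq_eqVlt pS dotvDl dotvZl /z dotv_mulmxl M_sym => /orP[/eqP ->|jk].
  have [/alpha_eq0 ->|ak0] := eqVneq (alpha k) 0.
    by rewrite !mulmx0 !dotv0r mulr0 addr0.
  rewrite MHp // dotvZr dotvBr (orth_span rp0 (z_in_span k)) sub0r.
  move: ak0; rewrite /beta /alpha /z mulf_eq0 negb_or invr_eq0 => /andP[rz0 _].
  by rewrite invfM invrK; field.
have jk2 : (j.+2 <= k.+1)%N by [].
by rewrite (orth_span rp0 (subvP (span_p_mono jk2) _ (MHp_in_span j))) pHp0 // mulr0 addr0.
Qed.

Let pcg_orthogonal k : pcg_orth k.
Proof.
elim: k => [|k]; last exact: pcg_orthS.
by split => //; rewrite /p /z /r.
Qed.

Let x_in_span k : x k \in span_p k.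
Proof.
elim: k => [|k IH]; first exact: rpred0.
rewrite xS rpredD ?rpredZ ?p_in_span //.
exact: subvP (span_p_mono (leqnSn k)) _ IH.
Qed.

Let richardson_in_span k : richardson H M g k \in span_p k.
Proof.
elim: k => [|k IH] /=; first exact: rpred0.
rewrite mulmxBr rpredD ?rpredB ?MH_span //.
  exact: subvP (span_p_mono (leqnSn k)) _ IH.
exact: (p_in_span (ltn0Sn k)).
Qed.

Let pcg_optimal s xstar y : H *m xstar = g -> y \in span_p s ->
  Hnorm2 H (x s - xstar) <= Hnorm2 H (y - xstar).
Proof.
move=> Hx ys.
have -> : y - xstar = (x s - xstar) + (y - x s) by rewrite [RHS]addrC addrA subrK.
apply: Hnorm2_addr_ge => //; first exact: posdef_psd.
have -> : H *m (x s - xstar) = - r s by rewrite residualE mulmxBr Hx opprB.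
have [rp0 _ _] := pcg_orthogonal s.
by rewrite dotvNr dotvC (orth_span rp0) ?oppr0 // rpredB ?x_in_span.
Qed.

Lemma pcg_error_le xstar (c : R) s : H *m xstar = g -> 0 <= c ->
  (forall e, Hnorm2 H (e - M *m (H *m e)) <= c * Hnorm2 H e) ->
  Hnorm2 H (pcg H M g s - xstar) <= c ^+ s * Hnorm2 H xstar.
Proof.
move=> Hx c_ge0 contr.
exact: le_trans (pcg_optimal Hx (richardson_in_span s)) (richardson_error Hx c_ge0 contr s).
Qed.

End PreconditionedCG.

Lemma le_sqr_mul_of_polarization (R : realType) (N X a : R) :
  0 <= N -> 0 <= X -> 0 <= a ->
  (forall u, 4 * u * N <= 2 * a * (u ^+ 2 * X + N)) -> N <= a ^+ 2 * X.
Proof.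
move=> N_ge0 X_ge0 a_ge0 polar.
have [->|Nn0] := eqVneq N 0; first by rewrite mulr_ge0 ?sqr_ge0.
have N_gt0 : 0 < N by rewrite lt_def Nn0.
have [X0|Xn0] := eqVneq X 0.
  by have := polar (a + 1); rewrite X0 mulr0 add0r; nra.
have X_gt0 : 0 < X by rewrite lt_def Xn0.
have [a0|an0] := eqVneq a 0.
  by have := polar 1; rewrite a0 mulr0 mul0r; nra.
have a_gt0 : 0 < a by rewrite lt_def an0.
pose u := N / (a * X).
have uaX : u * (a * X) = N by rewrite mulfVK // mulf_neq0.
have u_gt0 : 0 < u by rewrite divr_gt0 // mulr_gt0.
have u_le : u <= a by have := polar u; nra.
by rewrite -uaX expr2 -mulrA ler_wpM2r // mulr_ge0 // ltW.
Qed.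

Section QuadraticForm.
Variables (R : realType) (q : nat) (Q : 'M[R]_q).
Hypothesis Q_sym : Q^T = Q.

Lemma Hnorm2_polarization (x z : 'cV[R]_q) u :
  4 * u * dotv x (Q *m z) = Hnorm2 Q (u *: x + z) - Hnorm2 Q (u *: x - z).
Proof.
rewrite !Hnorm2E !mulmxDr !mulmxN -!scalemxAr.
rewrite !dotvDl !dotvDr !dotvNl !dotvNr !dotvZl !dotvZr (dotv_sym z x Q_sym); ring.
Qed.

Lemma Hnorm2_parallelogram (x z : 'cV[R]_q) u :
  Hnorm2 Q (u *: x + z) + Hnorm2 Q (u *: x - z) = 2 * (u ^+ 2 * Hnorm2 Q x + Hnorm2 Q z).
Proof.
rewrite !Hnorm2E !mulmxDr !mulmxN -!scalemxAr.
rewrite !dotvDl !dotvDr !dotvNl !dotvNr !dotvZl !dotvZr (dotv_sym z x Q_sym); ring.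
Qed.

End QuadraticForm.

Lemma richardson_contraction (R : realType) q (H M : 'M[R]_q) (a : R) :
  H^T = H -> M^T = M -> psd H -> 0 <= a ->
  (forall x, `|Hnorm2 H x - Hnorm2 M (H *m x)| <= a * Hnorm2 H x) ->
  forall e, Hnorm2 H (e - M *m (H *m e)) <= a ^+ 2 * Hnorm2 H e.
Proof.
move=> H_sym M_sym H_psd a_ge0 rel e.
(* With [K = H - H M H] one has [H (e - M H e) = K e], so the squared H-norm of
   [e - M H e] is a value of the symmetric form of [K], which polarization bounds. *)
pose K := H - H *m M *m H.
have K_sym : K^T = K by rewrite /K linearB /= !trmx_mul H_sym M_sym mulmxA.
have KE x : Hnorm2 K x = Hnorm2 H x - Hnorm2 M (H *m x).
  by rewrite !Hnorm2E /K mulmxBl dotvBr -!mulmxA dotv_mulmxl H_sym.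
have K_le x : `|Hnorm2 K x| <= a * Hnorm2 H x by rewrite KE.
set Te := e - M *m (H *m e).
have TeE : Hnorm2 H Te = dotv e (K *m Te).
  rewrite Hnorm2E (dotv_sym _ _ K_sym) [K *m e](_ : _ = H *m Te) //.
  by rewrite /Te /K mulmxBr mulmxBl !mulmxA.
have Hnorm2_ge0 x : 0 <= Hnorm2 H x by rewrite Hnorm2E.
apply: le_sqr_mul_of_polarization => // u.
rewrite {1}TeE Hnorm2_polarization // (mulrC 2 a) -mulrA.
rewrite -Hnorm2_parallelogram // mulrDr.
have := K_le (u *: e + Te); have := K_le (u *: e - Te).
rewrite !ler_norml => /andP[? ?] /andP[? ?]; lra.
Qed.

Lemma pcg_relative_error_le (R : realType) q (H M : 'M[R]_q) (g : 'cV[R]_q) (a : R) s :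
  H^T = H -> M^T = M -> posdef H -> posdef M -> H \in unitmx -> 0 <= a ->
  (forall x, `|Hnorm2 H x - Hnorm2 M (H *m x)| <= a * Hnorm2 H x) ->
  Hnorm2 H (pcg H M g s - invmx H *m g) / Hnorm2 H (invmx H *m g) <= (a ^+ 2) ^+ s.
Proof.
move=> H_sym M_sym H_pd M_pd H_unit a_ge0 rel.
have Hxstar : H *m (invmx H *m g) = g by rewrite mulKVmx.
have := pcg_error_le H_sym M_sym H_pd M_pd s Hxstar (sqr_ge0 a)
  (richardson_contraction H_sym M_sym (posdef_psd H_pd) a_ge0 rel).
have [-> _|xn0] := eqVneq (Hnorm2 H (invmx H *m g)) 0.
  by rewrite invr0 mulr0 exprn_ge0 ?sqr_ge0.
by rewrite ler_pdivrMr // lt_def xn0 Hnorm2E posdef_psd.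
Qed.

Lemma vnorm_mulmx_sqr_le (R : realType) q (Q : 'M[R]_q) (c : R) x :
  Q^T = Q -> psd Q -> 0 <= c -> (forall v, vnorm (Q *m v) <= c * vnorm v) ->
  vnorm (Q *m x) ^+ 2 <= c * Hnorm2 Q x.
Proof.
move=> Q_sym Q_psd c_ge0 Q_le; rewrite Hnorm2E.
have QQ_le : dotv (Q *m x) (Q *m (Q *m x)) <= c * vnorm (Q *m x) ^+ 2.
  apply: le_trans (ler_norm _) _; apply: le_trans (normr_dotv_le _ _) _.
  by rewrite mulrC expr2 mulrA ler_wpM2r ?vnorm_ge0.
have := dotv_CauchySchwarz x (Q *m x) Q_sym Q_psd.
have -> : dotv x (Q *m (Q *m x)) = vnorm (Q *m x) ^+ 2.
  by rewrite vnorm_sqr dotv_mulmxl Q_sym.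
have [-> _|Yn0 CS] := eqVneq (vnorm (Q *m x) ^+ 2) 0; first by rewrite mulr_ge0.
have Y_gt0 : 0 < vnorm (Q *m x) ^+ 2 by rewrite lt_def Yn0 sqr_ge0.
rewrite -(ler_pM2r Y_gt0) -expr2; apply: le_trans CS _.
by rewrite (mulrC c) -mulrA ler_wpM2l ?Q_psd.
Qed.

Section PreconditionerGap.
Variables (R : realType) (q : nat) (Sigma G H M : 'M[R]_q) (smax lam a1 : R).
Let S := Sigma + lam%:M.
Hypothesis HE : H = S - G.
Hypotheses (lam_gt0 : 0 < lam) (Sigma_psd : psd Sigma).
Hypotheses (smax_ge0 : 0 <= smax) (Sigma_le : forall v, vnorm (Sigma *m v) <= smax * vnorm v).
Hypotheses (H_sym : H^T = H) (H_coercive : coercive lam H).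
Hypothesis M_le : forall v, vnorm ((M - invmx S) *m v) <= a1 * vnorm v.

Let S_coercive : coercive lam S.
Proof.
move=> v; rewrite /S mulmxDl mul_scalar_mx dotvDr dotvZr.
by have := Sigma_psd v; lra.
Qed.

Let S_unit : S \in unitmx. Proof. exact: coercive_unitmx S_coercive. Qed.

Lemma Hnorm2_precond_gap x : Hnorm2 H x - Hnorm2 M (H *m x) =
  dotv x (G *m (invmx S *m (H *m x))) - Hnorm2 (M - invmx S) (H *m x).
Proof.
set y := H *m x; set w := invmx S *m y.
have Sw : S *m w = y by rewrite mulKVmx.
have HxBw : H *m (x - w) = G *m w.
  by rewrite mulmxBr -/y HE mulmxBl Sw opprB addrC subrK.
rewrite !Hnorm2E -HxBw mulmxBr !dotvBr (dotv_sym x w H_sym) -/y (dotvC w y).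
by rewrite [(M - _) *m y]mulmxBl dotvBr /w; ring.
Qed.

Hypothesis a1_ge0 : 0 <= a1.

Lemma Hnorm2_precond_gap_le x : `|Hnorm2 H x - Hnorm2 M (H *m x)| <=
  (smax + lam + specnorm G) * (lam ^- 2 * specnorm G + a1) * Hnorm2 H x.
Proof.
set a0 := specnorm G; set c := smax + lam + a0.
set y := H *m x; set w := invmx S *m y.
have a0_ge0 : 0 <= a0 := specnorm_ge0 G.
have H_le v : vnorm (H *m v) <= c * vnorm v.
  rewrite HE /S mulmxBl mulmxDl mul_scalar_mx /c !mulrDl.
  apply: le_trans (vnormB _ _) (lerD (le_trans (vnormD _ _) (lerD _ _)) _) => //.
    by rewrite vnormZ ger0_norm // ltW.
  exact: vnorm_mulmx_le.
have y_le : vnorm y ^+ 2 <= c * Hnorm2 H x.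
  apply: vnorm_mulmx_sqr_le => //; last by rewrite !addr_ge0 // ltW.
  exact: posdef_psd (coercive_posdef lam_gt0 H_coercive).
have Sw : S *m w = y by rewrite mulKVmx.
have xw_le : vnorm x * vnorm w <= lam ^- 2 * vnorm y ^+ 2.
  rewrite ler_pdivlMl ?exprn_gt0 // expr2 mulrACA.
  apply: ler_pM; rewrite ?mulr_ge0 ?vnorm_ge0 ?(ltW lam_gt0) //.
    exact: coercive_vnorm H_coercive x.
  by rewrite -Sw; apply: coercive_vnorm S_coercive w.
have Gw_le : `|dotv x (G *m (invmx S *m y))| <= a0 * (lam ^- 2 * vnorm y ^+ 2).
  apply: le_trans (normr_dotv_le _ _) _.
  apply: le_trans (ler_wpM2l (vnorm_ge0 x) (vnorm_mulmx_le G w)) _.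
  by rewrite mulrCA ler_wpM2l.
have My_le : `|Hnorm2 (M - invmx S) y| <= a1 * vnorm y ^+ 2.
  rewrite Hnorm2E; apply: le_trans (normr_dotv_le _ _) _.
  by rewrite expr2 mulrCA ler_wpM2l ?vnorm_ge0 // M_le.
rewrite Hnorm2_precond_gap; apply: le_trans (ler_normB _ _) _.
apply: le_trans (lerD Gw_le My_le) _.
rewrite mulrA (mulrC a0) -mulrDl.
have -> : c * (lam ^- 2 * a0 + a1) * Hnorm2 H x = (lam ^- 2 * a0 + a1) * (c * Hnorm2 H x).
  by ring.
by rewrite ler_wpM2l // addr_ge0 // mulr_ge0 // invr_ge0 exprn_ge0 // ltW.
Qed.

End PreconditionerGap.

Lemma sqr_le_cg_rate (R : realType) (a : R) : 0 <= a -> a < 2^-1 ->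
  a ^+ 2 <= (1 - Num.sqrt (1 - a / (1 - a))) / (1 + Num.sqrt (1 - a / (1 - a))).
Proof.
move=> a_ge0 a_lt; have a1_gt0 : 0 < 1 - a by lra.
set k := a / (1 - a); set r := Num.sqrt (1 - k).
have k_ge0 : 0 <= k by rewrite divr_ge0 // ltW.
have k_le1 : k <= 1 by rewrite ler_pdivrMr // mul1r; lra.
have r_ge0 : 0 <= r by rewrite sqrtr_ge0.
have r2 : r ^+ 2 = 1 - k by rewrite sqr_sqrtr // subr_ge0.
have r_le1 : r <= 1 by nra.
(* [(1 - r) / (1 + r) = k / (1 + r)^2 >= k / 4 >= a^2] *)
have k4 : 4 * a ^+ 2 <= k.
  by rewrite ler_pdivlMr //; have := mulr_ge0 a_ge0 (sqr_ge0 (1 - 2 * a)); nra.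
rewrite ler_pdivlMr; last by lra.
rewrite -(ler_pM2r (_ : 0 < 1 + r)); last by lra.
have -> : (1 - r) * (1 + r) = k by rewrite -subr_sqr expr1n r2; ring.
nra.
Qed.

Section RidgeMatrices.
Variables (R : realType) (p q : nat) (X : 'M[R]_(p, q)) (c lam : R).

Lemma gram_ridge_sym : (c *: (X^T *m X) + lam%:M)^T = c *: (X^T *m X) + lam%:M.
Proof. by rewrite linearD /= linearZ /= trmx_mul trmxK tr_scalar_mx. Qed.

Lemma gram_ridge_coercive : 0 <= c -> coercive lam (c *: (X^T *m X) + lam%:M).
Proof.
move=> c_ge0 v; rewrite mulmxDl -scalemxAl mul_scalar_mx dotvDr !dotvZr.
rewrite -mulmxA -dotv_mulmxl; have := mulr_ge0 c_ge0 (dotvv_ge0 (X *m v)); lra.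
Qed.

End RidgeMatrices.

Lemma posdef_scale_sum (R : realType) q m (F : 'I_m -> 'M[R]_q) (k : R) :
  (0 < m)%N -> 0 < k -> (forall i, posdef (F i)) -> posdef (k *: \sum_i F i).
Proof.
move=> m_gt0 k_gt0 F_pd v vn0; rewrite -scalemxAl mulmx_suml dotvZr dotv_sumr.
rewrite pmulr_rgt0 // (bigD1 (Ordinal m_gt0)) //= ltr_wpDr ?F_pd //.
by apply: sumr_ge0 => i _; apply: posdef_psd.
Qed.

Lemma Htinv_sym (R : realType) m b d (A : 'M[R]_(m * b, d)) Sigma lam :
  (Htinv A Sigma lam)^T = Htinv A Sigma lam.
Proof.
rewrite /Htinv linearZ linear_sum /=; congr (_ *: _); apply: eq_bigr => i _.
by rewrite trmx_inv scalerA gram_ridge_sym.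
Qed.

Lemma Htinv_posdef (R : realType) m b d (A : 'M[R]_(m * b, d)) Sigma lam :
  (0 < m)%N -> (0 < b)%N -> 0 < lam -> m%:R * deff Sigma lam < (m * b)%:R ->
  posdef (Htinv A Sigma lam).
Proof.
move=> m_gt0 b_gt0 lam_gt0 deff_lt.
apply: posdef_scale_sum => // [|i]; first by rewrite invr_gt0 ltr0n.
have n_gt0 : 0 < (m * b)%:R :> R by rewrite ltr0n muln_gt0 m_gt0.
have scale_ge0 : 0 <= (1 - m%:R * deff Sigma lam / (m * b)%:R)^-1 * (m%:R / (m * b)%:R).
  by rewrite mulr_ge0 ?divr_ge0 // invr_ge0 subr_ge0 ler_pdivrMr // mul1r ltW.
have B_coercive := gram_ridge_coercive (block A i) lam scale_ge0.
rewrite scalerA; apply: posdef_invmx; first exact: gram_ridge_sym.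
  exact: coercive_unitmx lam_gt0 B_coercive.
exact: coercive_posdef lam_gt0 B_coercive.
Qed.

Lemma covariance_sym (dT : measure_display) (T : measurableType dT) (R : realType)
  (P : probability T R) n q (A : T -> 'M[R]_(n, q)) (Sigma : 'M[R]_q) (r : 'I_n) :
  (forall j k, ('E_P[fun w => (A w r j * A w r k)%R] = (Sigma j k)%:E)%E) ->
  Sigma^T = Sigma.
Proof.
move=> cov; apply/matrixP => j k; rewrite mxE.
have := cov j k; under eq_fun do rewrite mulrC.
by rewrite cov => -[].
Qed.

Theorem lemmaB1 (R : realType) (dT : measure_display) (T : measurableType dT)
  (P : probability T R) (m b d : nat) (A : T -> 'M[R]_(m * b, d))
  (Sigma : 'M[R]_d) (smax lam : R) (g : 'cV[R]_d) (s : nat) (w : T) :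
  (0 < m)%N -> (0 < b)%N ->
  (forall r j, measurable_fun setT (fun w' => A w' r j)) ->
  (forall r j, P.-integrable setT (fun w' => ((A w' r j) ^+ 2)%:E)) ->
  (forall r j, ('E_P[fun w' => A w' r j] = 0%:E)%E) ->
  (forall r j k, ('E_P[fun w' => (A w' r j * A w' r k)%R] = (Sigma j k)%:E)%E) ->
  rows_iid P A ->
  (forall a, eigenvalue Sigma a -> 0 < a) ->
  eigenvalue Sigma smax -> (forall a, eigenvalue Sigma a -> a <= smax) ->
  0 < lam ->
  m%:R * deff Sigma lam < (m * b)%:R ->
  let n : R := (m * b)%:R in
  let H := Hmat (A w) lam in
  let Htinv_w := Htinv (A w) Sigma lam in
  let EHtinv := \matrix_(i < d, j < d) fine ('E_P[fun w' => Htinv (A w') Sigma lam i j])%E in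
  let alpha0 := specnorm (Sigma - n^-1 *: ((A w)^T *m A w)) in
  let alpha1 := specnorm (Htinv_w - EHtinv) in
  let Omega0 := EHtinv - invmx (Sigma + lam%:M) in
  let alpha := (smax + lam + alpha0) * (lam ^- 2 * alpha0 + alpha1 + specnorm Omega0) in
  alpha < 2^-1 ->
  let pstar := invmx H *m g in
  let pt := pcg H Htinv_w g s in
  let rho := (1 - Num.sqrt (1 - alpha / (1 - alpha))) /
             (1 + Num.sqrt (1 - alpha / (1 - alpha))) in
  Hnorm2 H (pt - pstar) / Hnorm2 H pstar <= 4 * rho ^+ s.
Proof.
move=> m_gt0 b_gt0 _ _ _ cov _ eig_gt0 eig_smax smax_max lam_gt0 deff_lt.
move=> n H M EM alpha0 alpha1 Omega0 alpha alpha_lt /=.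
set rho := (1 - _) / _.
have r0 : (0 < m * b)%N by rewrite muln_gt0 m_gt0.
have Sigma_sym := covariance_sym (cov (Ordinal r0)).
have smax_ge0 : 0 <= smax := ltW (eig_gt0 _ eig_smax).
have Sigma_psd : psd Sigma by apply: realsym_psd => // a /eig_gt0 /ltW.
have Sigma_le : forall v, vnorm (Sigma *m v) <= smax * vnorm v.
  by apply: realsym_vnorm_le => // a ea; rewrite ger0_norm ?smax_max // ltW ?eig_gt0.
have H_sym : H^T = H := gram_ridge_sym _ _ _.
have H_coercive : coercive lam H by apply: gram_ridge_coercive; rewrite invr_ge0.
have HE : H = Sigma + lam%:M - (Sigma - n^-1 *: ((A w)^T *m A w)).
  by rewrite [RHS]addrC opprB addrA subrK.
have M_le v :
    vnorm ((M - invmx (Sigma + lam%:M)) *m v) <= (alpha1 + specnorm Omega0) * vnorm v.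
  rewrite -(subrK EM M) -addrA mulmxDl mulrDl.
  by apply: le_trans (vnormD _ _) (lerD _ _); apply: vnorm_mulmx_le.
have alpha_ge0 : 0 <= alpha.
  have lam_ge0 := ltW lam_gt0.
  by rewrite mulr_ge0 ?addr_ge0 ?mulr_ge0 ?invr_ge0 ?exprn_ge0 ?specnorm_ge0.
have rel x : `|Hnorm2 H x - Hnorm2 M (H *m x)| <= alpha * Hnorm2 H x.
  rewrite /alpha -(addrA (lam ^- 2 * alpha0)); apply: (Hnorm2_precond_gap_le HE) => //.
  by rewrite addr_ge0 ?specnorm_ge0.
apply: le_trans (pcg_relative_error_le g s H_sym (Htinv_sym _ _ _)
  (coercive_posdef lam_gt0 H_coercive) (Htinv_posdef _ m_gt0 b_gt0 lam_gt0 deff_lt)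
  (coercive_unitmx lam_gt0 H_coercive) alpha_ge0 rel) _.
have rate : alpha ^+ 2 <= rho := sqr_le_cg_rate alpha_ge0 alpha_lt.
have rho_ge0 : 0 <= rho := le_trans (sqr_ge0 _) rate.
apply: le_trans (lerXn2r s _ _ rate) _; rewrite ?nnegrE ?sqr_ge0 //.
by rewrite ler_peMl ?exprn_ge0 // ler1n.
Qed.
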